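(* Let $X$ be a connected weighted bipartite graph with vertex $u$. If $\theta\in\Phi_{\mathbf e_u}\setminus\{0\}$, then $(E_\theta)_{u,u}\le \frac12$. If additionally $0\in\Phi_{\mathbf e_u}$, then $(E_\theta)_{u,u}<\frac12$.
   Context: Graphs are simple, connected, undirected, with nonzero real edge weights; $A=A(X)$ is the weighted adjacency matrix with spectral decomposition $A=\sum_\lambda \lambda E_\lambda$ over its distinct eigenvalues, $E_\lambda$ being the orthogonal projection onto the $\lambda$-eigenspace. The eigenvalue support of $u$ is $\Phi_{\mathbf e_u}=\{\lambda: E_\lambda\mathbf e_u\ne 0\}$. *)

From HB Require Import structures.
From mathcomp Require Import all_boot all_order all_algebra.
Set Implicit Arguments. Unset Strict Implicit. Unset Printing Implicit Defensive.
Import Order.TTheory GRing.Theory Num.Theory.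
Local Open Scope ring_scope.

(* A weighted graph on vertex set 'I_n is given by its weighted adjacency
   matrix A : entries A i j != 0 are exactly the edges (with weight A i j). *)
Definition adj_rel (R : numFieldType) n (A : 'M[R]_n) : rel 'I_n :=
  fun i j => A i j != 0.

Definition simple_weighted_graph (R : numFieldType) n (A : 'M[R]_n) : Prop :=
  A^T = A /\ (forall i, A i i = 0).

Definition connected_graph (R : numFieldType) n (A : 'M[R]_n) : Prop :=
  forall i j : 'I_n, connect (adj_rel A) i j.

Definition bipartite_graph (R : numFieldType) n (A : 'M[R]_n) : Prop :=
  exists c : 'I_n -> bool, forall i j, A i j != 0 -> c i != c j.

Definition orth_proj_onto (R : numFieldType) n (W P : 'M[R]_n) : Prop :=
  P^T = P /\ P *m P = P /\ (P == W)%MS.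

Definition is_Eproj (R : numFieldType) n (A : 'M[R]_n) (lambda : R)
  (P : 'M[R]_n) : Prop := orth_proj_onto (eigenspace A lambda) P.

(* lambda is in the eigenvalue support Phi_{e_u}: E_lambda e_u <> 0 *)
Definition in_eig_support (R : numFieldType) n (A : 'M[R]_n) (u : 'I_n)
  (lambda : R) : Prop :=
  exists P, is_Eproj A lambda P /\ P *m delta_mx u 0 != (0 : 'cV[R]_n).

From HB Require Import structures.
From mathcomp Require Import all_boot all_order all_algebra.
From mathcomp Require Import lra.
Import Order.TTheory GRing.Theory Num.Theory.
Local Open Scope ring_scope.

(* Write D for the diagonal matrix with entry +1 on one colour class of the
   bipartition and -1 on the other, so that D A D = -A. Conjugating E_theta by
   D gives a projection E' with E' A = -theta E' and E'_{uu} = (E_theta)_{uu}.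
   Projections onto eigenspaces of the symmetric matrix A for distinct
   eigenvalues are orthogonal, so E_theta + E' (and, when 0 is in the support
   of u, E_theta + E' + E_0) is again an orthogonal projection; its diagonal
   entries are at most 1, while (E_0)_{uu} > 0. *)

Definition projector {R : pzRingType} {n} (P : 'M[R]_n) : Prop :=
  P^T = P /\ P *m P = P.

Section Projectors.
Context {R : realFieldType} {n : nat}.
Implicit Types P Q : 'M[R]_n.

Lemma projector_diag {P} u : projector P -> P u u = \sum_k P k u ^+ 2.
Proof.
case=> PT PP; rewrite -{1}PP mxE; apply: eq_bigr => k _.
by rewrite -{1}PT mxE expr2.
Qed.

Lemma projector_diag_ge0 {P} u : projector P -> 0 <= P u u.
Proof.
by move/projector_diag->; rewrite sumr_ge0 // => k _; rewrite sqr_ge0.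
Qed.

Lemma projector_diag_le1 {P} u : projector P -> P u u <= 1.
Proof.
move=> projP; have Puu_ge0 := projector_diag_ge0 u projP.
have : P u u ^+ 2 <= P u u.
  rewrite [leRHS](projector_diag u projP) (bigD1 u) //=.
  by rewrite lerDl sumr_ge0 // => k _; rewrite sqr_ge0.
rewrite expr2; nra.
Qed.

Lemma projector_diag_gt0 {P} u :
  projector P -> P *m delta_mx u (0 : 'I_1) != 0 -> 0 < P u u.
Proof.
move=> projP; rewrite -colE lt_def projector_diag_ge0 // andbT.
apply: contra => /eqP Puu0; apply/eqP/matrixP => k j; rewrite !mxE.
have sqr_P0 : P k u ^+ 2 = 0.
  apply: (psumr_eq0P (P := xpredT) (fun k _ => sqr_ge0 (P k u))) => //.
  by rewrite -projector_diag.
by apply/eqP; rewrite -sqrf_eq0 sqr_P0.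
Qed.

Lemma projectorD {P Q} : projector P -> projector Q -> P *m Q = 0 ->
  projector (P + Q).
Proof.
move=> [PT PP] [QT QQ] PQ.
have QP : Q *m P = 0 by rewrite -PT -QT -trmx_mul PQ trmx0.
split; first by rewrite linearD /= PT QT.
by rewrite mulmxDl !mulmxDr PP QQ PQ QP addr0 add0r.
Qed.

End Projectors.

Lemma Eproj_projector {R : numFieldType} {n} {A P : 'M[R]_n} {a} :
  is_Eproj A a P -> projector P.
Proof. by case=> PT [PP _]. Qed.

Lemma Eproj_mulmx {R : numFieldType} {n} {A P : 'M[R]_n} {a} :
  is_Eproj A a P -> P *m A = a *: P.
Proof.
case=> _ [_ /andP[/sub_kermxP]].
by rewrite mulmxBr mul_mx_scalar => /eqP; rewrite subr_eq0 => /eqP.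
Qed.

Lemma eigen_projector_orth {R : fieldType} {n} {A P Q : 'M[R]_n} {a b} :
  A^T = A -> Q^T = Q -> P *m A = a *: P -> Q *m A = b *: Q -> a != b ->
  P *m Q = 0.
Proof.
move=> AT QT PA QA ab; apply/eqP.
have : a *: (P *m Q) = b *: (P *m Q).
  rewrite scalemxAl -PA -mulmxA -{1}QT -{1}AT -trmx_mul QA.
  by rewrite linearZ /= QT -scalemxAr.
by move/eqP; rewrite -subr_eq0 -scalerBl scaler_eq0 subr_eq0 (negbTE ab).
Qed.

Section Signature.
Context {R : comPzRingType} {n : nat} (c : 'I_n -> bool).

Definition sign_mx : 'M[R]_n := diag_mx (\row_i (-1) ^+ c i).

Lemma tr_sign_mx : sign_mx^T = sign_mx.
Proof. exact: tr_diag_mx. Qed.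

Lemma sign_mxK : sign_mx *m sign_mx = 1%:M.
Proof.
apply/matrixP => i j; rewrite mul_diag_mx !mxE.
by case: eqP => [->|_]; rewrite ?mulr1n ?mulr0n ?mulr0 // -signr_addb addbb.
Qed.

Lemma sign_mx_conj_diag (P : 'M[R]_n) u : (sign_mx *m P *m sign_mx) u u = P u u.
Proof.
by rewrite mul_mx_diag mul_diag_mx !mxE mulrC mulrA -signr_addb addbb mul1r.
Qed.

Lemma sign_mx_conj_projector {P : 'M[R]_n} :
  projector P -> projector (sign_mx *m P *m sign_mx).
Proof.
case=> PT PP; split; first by rewrite !trmx_mul tr_sign_mx PT mulmxA.
rewrite !mulmxA -(mulmxA _ sign_mx sign_mx) sign_mxK mulmx1.
by rewrite -(mulmxA _ P P) PP.
Qed.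

Lemma sign_mx_conj_bipartite {A : 'M[R]_n} :
  (forall i j, A i j != 0 -> c i != c j) -> sign_mx *m A *m sign_mx = - A.
Proof.
move=> bipA; apply/matrixP => i j; rewrite mul_mx_diag mul_diag_mx !mxE.
have [->|/bipA] := eqVneq (A i j) 0; first by rewrite mulr0 mul0r oppr0.
by case: (c i); case: (c j); rewrite //= ?mulN1r ?mulrN1 ?mul1r ?mulr1.
Qed.

Lemma sign_mx_conj_eigen {A P : 'M[R]_n} {a} :
  (forall i j, A i j != 0 -> c i != c j) -> P *m A = a *: P ->
  (sign_mx *m P *m sign_mx) *m A = (- a) *: (sign_mx *m P *m sign_mx).
Proof.
move=> bipA PA.
have DA : sign_mx *m A = - (A *m sign_mx).
  by rewrite -[LHS]mulmx1 -sign_mxK mulmxA (sign_mx_conj_bipartite bipA) mulNmx.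
rewrite -mulmxA DA mulmxN !mulmxA -(mulmxA _ P A) PA.
by rewrite -scalemxAr -scalemxAl scaleNr.
Qed.

End Signature.

Theorem proposition10 (R : rcfType) (n : nat) (A : 'M[R]_n) (u : 'I_n)
    (theta : R) (Etheta : 'M[R]_n) :
  simple_weighted_graph A -> connected_graph A -> bipartite_graph A ->
  is_Eproj A theta Etheta ->
  in_eig_support A u theta -> theta != 0 ->
  Etheta u u <= 1 / 2 /\ (in_eig_support A u 0 -> Etheta u u < 1 / 2).
Proof.
move=> [AT _] _ [c bipA] Eth _ theta_neq0.
have projE := Eproj_projector Eth; have EA := Eproj_mulmx Eth.
pose E' := sign_mx c *m Etheta *m sign_mx c.
have projE' : projector E' := sign_mx_conj_projector c projE.
have E'A : E' *m A = (- theta) *: E' := sign_mx_conj_eigen c bipA EA.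
have E'uu : E' u u = Etheta u u := sign_mx_conj_diag c Etheta u.
have theta_neqN : theta != - theta by rewrite eq_sym eqNr.
have EE' := eigen_projector_orth AT projE'.1 EA E'A theta_neqN.
have projS := projectorD projE projE' EE'.
split; first by have := projector_diag_le1 u projS; rewrite mxE E'uu; lra.
move=> [E0 [E0h E0u]].
have projE0 := Eproj_projector E0h; have E0A := Eproj_mulmx E0h.
have SE0 : (Etheta + E') *m E0 = 0.
  rewrite mulmxDl (eigen_projector_orth AT projE0.1 EA E0A theta_neq0).
  by rewrite (eigen_projector_orth AT projE0.1 E'A E0A) ?oppr_eq0 // addr0.
have := projector_diag_le1 u (projectorD projS projE0 SE0).
have := projector_diag_gt0 u projE0 E0u.
by rewrite mxE [(Etheta + E') u u]mxE E'uu; lra.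
Qed.
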